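(* If $R$ is a GSWNC ring, then its Jacobson radical $J(R)$ is nil.
   Context: All rings are associative with identity. An element $a$ of a ring is strongly weakly nil-clean if there exist an idempotent $e$ and a nilpotent $q$ with $eq = qe$ such that $a = q + e$ or $a = q - e$. A ring is GSWNC if every non-invertible element is strongly weakly nil-clean. *)

From HB Require Import structures.
From mathcomp Require Import all_boot all_order all_algebra.
Set Implicit Arguments. Unset Strict Implicit. Unset Printing Implicit Defensive.
Import GRing.Theory.
Local Open Scope ring_scope.

Definition invertible (R : pzRingType) (a : R) : Prop :=
  exists b : R, a * b = 1 /\ b * a = 1.

Definition idempotent (R : pzRingType) (e : R) : Prop := e * e = e.

Definition nilpotent (R : pzRingType) (q : R) : Prop := exists n : nat, q ^+ n = 0.

Definition SWNC (R : pzRingType) (a : R) : Prop :=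
  exists e q : R, idempotent e /\ nilpotent q /\ e * q = q * e /\
    (a = q + e \/ a = q - e).

Definition GSWNC (R : pzRingType) : Prop :=
  forall a : R, ~ invertible a -> SWNC a.

Definition left_ideal (R : pzRingType) (I : R -> Prop) : Prop :=
  I 0 /\ (forall x y, I x -> I y -> I (x - y)) /\ (forall r x, I x -> I (r * x)).

Definition maximal_left_ideal (R : pzRingType) (M : R -> Prop) : Prop :=
  left_ideal M /\ ~ M 1 /\
  (forall I : R -> Prop, left_ideal I -> (forall x, M x -> I x) ->
     I 1 \/ (forall x, I x -> M x)).

Definition jacobson (R : pzRingType) : R -> Prop :=
  fun x => forall M : R -> Prop, maximal_left_ideal M -> M x.

Definition nil_set (R : pzRingType) (S : R -> Prop) : Prop :=
  forall x, S x -> nilpotent x.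

(* Every x in J(R) is non-invertible (unless R = 0), so x = q + e or x = q - e
   with e idempotent and q nilpotent.  Then xe = (1 + q)e or xe = -(1 - q)e, and
   1 + q, 1 - q are units, so e = r x e for some r.  Since 1 - r x is left
   invertible for x in J(R), (1 - r x) e = 0 forces e = 0, hence x = q. *)
From mathcomp Require Import all_boot all_order all_algebra.
From mathcomp Require Import boolp classical_sets.
Set Implicit Arguments. Unset Strict Implicit.
Import GRing.Theory.
Local Open Scope ring_scope.
Local Open Scope classical_set_scope.

Section Ideals.
Variable R : pzRingType.
Implicit Types (x y r : R) (I A : set R).

Lemma left_idealD I x y : left_ideal I -> I x -> I y -> I (x + y).
Proof.
move=> [I0 [IB _]] Ix Iy.
by rewrite -[y]opprK -[- y]sub0r; apply: (IB) => //; apply: (IB).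
Qed.

Lemma left_ideal_range_mulr x : left_ideal (range ( *%R^~ x)).
Proof.
split; first by exists 0; rewrite ?mul0r.
split; first by move=> _ _ [s _ <-] [t _ <-]; exists (s - t); rewrite ?mulrBl.
by move=> r _ [s _ <-]; exists (r * s); rewrite ?mulrA.
Qed.

Definition proper_left_ideal_over I A := [/\ left_ideal A, I `<=` A & ~ A 1].

Lemma left_ideal_bigcup_chain (F : set (set R)) :
    (forall A, F A -> A = set0 \/ left_ideal A) -> total_on F subset ->
  \bigcup_(A in F) A !=set0 -> left_ideal (\bigcup_(A in F) A).
Proof.
move=> Fideal Ftot [x0 [X0 FX0 X0x0]].
have ideal_of A x : F A -> A x -> left_ideal A.
  by move=> FA Ax; case: (Fideal A FA) => // A0; rewrite A0 in Ax.
split; first by exists X0 => //; case: (ideal_of _ _ FX0 X0x0).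
split.
- move=> x y [X FX Xx] [Y FY Yy].
  have [XY|YX] := Ftot X Y FX FY.
  + have [_ [YB _]] := ideal_of _ _ FY Yy.
    by exists Y => //; apply: YB => //; apply: XY.
  + have [_ [XB _]] := ideal_of _ _ FX Xx.
    by exists X => //; apply: XB => //; apply: YX.
- move=> r x [X FX Xx]; have [_ [_ XM]] := ideal_of _ _ FX Xx.
  by exists X => //; apply: XM.
Qed.

Lemma maximal_left_ideal_ext I : left_ideal I -> ~ I 1 ->
  exists2 M, maximal_left_ideal M & I `<=` M.
Proof.
move=> LI nI1.
(* [set0] is admitted so that the empty chain has an upper bound. *)
pose P A := A = set0 \/ proper_left_ideal_over I A.
have [A [PA Amax]] : exists A, P A /\ forall B, A `<` B -> ~ P B.
  apply: Zorn_bigcup => F FP Ftot.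
  have [->|/set0P UF] := eqVneq (\bigcup_(X in F) X) set0; first by left.
  have [x0 [X0 FX0 X0x0]] := UF.
  have [X00|[_ IX0 _]] := FP X0 FX0; first by rewrite X00 in X0x0.
  right; split.
  - by apply: left_ideal_bigcup_chain => // X /FP [->|[]]; [left|right].
  - by move=> x Ix; exists X0 => //; apply: IX0.
  - by move=> [X /[dup] FX /FP [->|[]]].
have [A0|[LA IA nA1]] := PA.
  exfalso; apply: (Amax I); last by right; split.
  by rewrite A0; split=> // sI0; apply: (sI0 0); case: LI.
exists A => //; split=> //; split=> // J LJ AJ.
have [J1|nJ1] := lem (J 1); [by left | right].
apply: contrapT => nJA; apply: (Amax J); first by split.
by right; split=> // x /IA /AJ.
Qed.

End Ideals.

Section Jacobson.
Variables (R : pzRingType) (x : R).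
Hypothesis Jx : jacobson x.

Lemma jacobson_left_unit r : exists s, s * (1 - r * x) = 1.
Proof.
apply: contrapT => nunit.
have nI1 : ~ range ( *%R^~ (1 - r * x)) 1 by move=> [s _ s1]; apply: nunit; exists s.
have [M maxM IM] := maximal_left_ideal_ext (left_ideal_range_mulr _) nI1.
have [LM [nM1 _]] := maxM; have [_ [_ MM]] := LM.
apply: nM1; rewrite -(subrK (r * x) 1).
apply: left_idealD => //; first by apply: IM; exists 1; rewrite ?mul1r.
by apply: MM; apply: Jx.
Qed.

Lemma jacobson_left_regular r e : e = r * x * e -> e = 0.
Proof.
move=> e_eq; have [s s_inv] := jacobson_left_unit r.
by rewrite -[e]mul1r -s_inv -mulrA mulrBl mul1r -e_eq subrr mulr0.
Qed.

Lemma jacobson_invertible_trivial : invertible x -> (1 : R) = 0.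
Proof. by move=> [b [_ bx1]]; apply: (jacobson_left_regular (r := b)); rewrite mulr1. Qed.

End Jacobson.

Section Nilpotent.
Variable R : pzRingType.
Implicit Types x e q : R.

Lemma nilpotentN q : nilpotent q -> nilpotent (- q).
Proof. by case=> n qn0; exists n; rewrite exprNn qn0 mulr0. Qed.

Lemma nilpotent_left_unit_subr q : nilpotent q -> exists u, u * (1 - q) = 1.
Proof.
case=> n qn0; exists (\sum_(i < n) q ^+ i).
have cqS : GRing.comm q (\sum_(i < n) q ^+ i).
  by apply: commr_sum => i _; apply: commrX.
rewrite (commrB (commr1 _) (commr_sym cqS)) -opprB mulNr -subrX1.
by rewrite qn0 sub0r opprK.
Qed.

Lemma idempotent_left_multiple x e q : idempotent e -> nilpotent q ->
  x = q + e \/ x = q - e -> exists r, e = r * x * e.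
Proof.
move=> e_idem q_nil [->|->].
- have [u u_inv] := nilpotent_left_unit_subr (nilpotentN q_nil).
  have xe : (q + e) * e = (1 - - q) * e.
    by rewrite opprK mulrDl e_idem mulrDl mul1r addrC.
  by exists u; rewrite -mulrA xe mulrA u_inv mul1r.
- have [u u_inv] := nilpotent_left_unit_subr q_nil.
  have xe : (q - e) * e = - ((1 - q) * e).
    by rewrite mulrBl e_idem mulrBl mul1r opprB.
  by exists (- u); rewrite -mulrA xe mulrN mulNr opprK mulrA u_inv mul1r.
Qed.

End Nilpotent.

Theorem lemma2p10 (R : pzRingType) : GSWNC R -> nil_set (@jacobson R).
Proof.
move=> R_gswnc x Jx.
have [x_inv|/R_gswnc [e [q [e_idem [q_nil [_ x_eq]]]]]] := lem (invertible x).
  by exists 1%N; rewrite -[x]mul1r (jacobson_invertible_trivial Jx x_inv) mul0r.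
have [r e_eq] := idempotent_left_multiple e_idem q_nil x_eq.
have e0 := jacobson_left_regular Jx e_eq.
by case: x_eq; rewrite e0 ?addr0 ?subr0 => ->.
Qed.
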